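(* Let $\gamma$ be the geodesic with $\gamma(0)=1$ and $\dot\gamma(0)=z_0+x_0\in\mathfrak z\oplus\mathfrak v$, let $J=J_{z_0}$ and $x'(t)=e^{tJ}x_0$. A (smooth) vector field along $\gamma$ of the form $Y(t)=z(t)+e^{tJ}v(t)$, with $z(t)\in\mathfrak z$ and $v(t)\in\mathfrak v$ for each $t$, is a Jacobi field if and only if there is a constant $\zeta\in\mathfrak z$ such that for all $t$ $$\dot z(t)-[e^{tJ}v(t),x'(t)]=\zeta,\qquad e^{tJ}\ddot v(t)+e^{tJ}J\dot v(t)-J_\zeta x'(t)=0.$$
   Context: Let $N$ be a connected, simply connected, 2-step nilpotent real Lie group with Lie algebra $\mathfrak n$ and center $\mathfrak z$. Let $\langle\,,\rangle$ be an inner product on $\mathfrak n$, meaning a nondegenerate symmetric bilinear form (possibly indefinite); the same symbol denotes the induced left-invariant pseudo-Riemannian metric on $N$, with Levi-Civita connection $\nabla$. Assume the restriction of $\langle\,,\rangle$ to $\mathfrak z$ is nondegenerate and put $\mathfrak v=\mathfrak z^\perp$, so $\mathfrak n=\mathfrak z\oplus\mathfrak v$ orthogonally. For $z\in\mathfrak z$ define $J_z:\mathfrak v\to\mathfrak v$ by $\langle J_zx,y\rangle=\langle z,[x,y]\rangle$ for all $y\in\mathfrak v$; $J_z$ is skew-adjoint. All tangent spaces of $N$ are identified with $\mathfrak n=T_1N$ via left translation, so vector fields along a curve are $\mathfrak n$-valued functions; with this identification the geodesic $\gamma$ with $\gamma(0)=1$, $\dot\gamma(0)=z_0+x_0$ ($z_0\in\mathfrak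 z$, $x_0\in\mathfrak v$) satisfies $\dot\gamma(t)=z_0+e^{tJ_{z_0}}x_0$. A Jacobi field along $\gamma$ is a vector field $Y$ along $\gamma$ with $\nabla_{\dot\gamma}\nabla_{\dot\gamma}Y+R(Y,\dot\gamma)\dot\gamma=0$, where $R(X,Y)=\nabla_X\nabla_Y-\nabla_Y\nabla_X-\nabla_{[X,Y]}$ (equivalently, the variation fields of geodesic variations of $\gamma$). *)

From HB Require Import structures.
From mathcomp Require Import all_boot all_order all_algebra.
From mathcomp Require Import all_classical all_reals all_analysis.
Set Implicit Arguments. Unset Strict Implicit. Unset Printing Implicit Defensive.
Import Order.TTheory GRing.Theory Num.Theory.
Import numFieldNormedType.Exports.
Local Open Scope ring_scope.
Local Open Scope classical_set_scope.

(* The Lie algebra n is modelled as 'rV[R]_n; linear maps act on the right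
   (x |-> x *m A). *)

Section Defs.
Variables (R : realType) (n : nat).
Notation V := 'rV[R]_n.

Definition ip (G : 'M[R]_n) (x y : V) : R := (x *m G *m y^T) 0 0.

(* hypotheses on the bracket: bilinear (linear in 1st arg + skew),
   2-step nilpotent, not abelian *)
Definition two_step_nilpotent (br : V -> V -> V) : Prop :=
  [/\ (forall (a : R) (x y w : V), br (a *: x + y) w = a *: br x w + br y w),
      (forall x y : V, br x y = - br y x),
      (forall x y w : V, br (br x y) w = 0) &
      (exists x y : V, br x y != 0)].

Definition ncenter (br : V -> V -> V) (z : V) : Prop := forall x : V, br z x = 0.

Definition vpart (G : 'M[R]_n) (br : V -> V -> V) (x : V) : Prop :=
  forall z : V, ncenter br z -> ip G z x = 0.

Definition inner_product (G : 'M[R]_n) : Prop := G^T = G /\ G \in unitmx.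

Definition center_nondeg (G : 'M[R]_n) (br : V -> V -> V) : Prop :=
  forall z : V, ncenter br z -> (forall w : V, ncenter br w -> ip G z w = 0) -> z = 0.

(* Jm z is a matrix whose action on v is J_z : v -> v, i.e.
   J_z x in v and <J_z x, y> = <z,[x,y]> for all y in v (for z in the ncenter).
   Its action on the ncenter is irrelevant and left unconstrained. *)
Definition is_J (G : 'M[R]_n) (br : V -> V -> V) (Jm : V -> 'M[R]_n) : Prop :=
  forall z : V, ncenter br z -> forall x : V, vpart G br x ->
    vpart G br (x *m Jm z) /\
    (forall y : V, vpart G br y -> ip G (x *m Jm z) y = ip G z (br x y)).

(* Levi-Civita connection on left-invariant fields (Koszul formula):
   <nabla_X Y, Z> = 1/2 (<[X,Y],Z> - <[Y,Z],X> + <[Z,X],Y>) *)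
Definition koszul (G : 'M[R]_n) (br : V -> V -> V) (X Y Z : V) : R :=
  2^-1 * (ip G (br X Y) Z - ip G (br Y Z) X + ip G (br Z X) Y).

Definition nabla (G : 'M[R]_n) (br : V -> V -> V) (X Y : V) : V :=
  (\row_j koszul G br X Y (delta_mx 0 j)) *m invmx G.

Definition curv (G : 'M[R]_n) (br : V -> V -> V) (X Y Z : V) : V :=
  nabla G br X (nabla G br Y Z) - nabla G br Y (nabla G br X Z)
  - nabla G br (br X Y) Z.

(* covariant derivative along a curve with velocity c (in the
   left-invariant trivialisation): D Y = Y' + nabla_{c} Y *)
Definition covD (G : 'M[R]_n) (br : V -> V -> V) (c Y : R -> V) (t : R) : V :=
  derive1 Y t + nabla G br (c t) (Y t).

Definition is_jacobi (G : 'M[R]_n) (br : V -> V -> V) (c Y : R -> V) : Prop :=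
  forall t : R, covD G br c (covD G br c Y) t + curv G br (Y t) (c t) (c t) = 0.

Definition mexp (A : 'M[R]_n) : 'M[R]_n :=
  limn (series (fun k : nat => (k`!%:R)^-1 *: A ^+ k)).

Definition smooth (f : R -> V) : Prop :=
  forall (k : nat) (t : R), derivable (derive1n k f) t 1.

End Defs.

(* By the Koszul formula, for a, b central and p, q in v the Levi-Civita connection is
   nabla_(a+p) (b+q) = 1/2 [p, q] - 1/2 J_a q - 1/2 J_b p.  Along the geodesic,
   whose velocity is z0 + x'(t) with x'' = J x', differentiate Y = z + e^(tJ) v using
   d/dt e^(tJ) = e^(tJ) J and expand nabla nabla Y + R(Y, gamma') gamma' with this
   formula: its z-component is the derivative of zeta(t) = z' - [e^(tJ) v, x'] and its
   v-component is e^(tJ) v'' + e^(tJ) J v' - J_zeta(t) x'.  As z and v meet only in 0,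
   Y is a Jacobi field iff both components vanish, i.e. iff zeta is a constant zeta
   and the second equation holds with J_zeta. *)

From HB Require Import structures.
From mathcomp Require Import all_boot all_order all_algebra.
From mathcomp Require Import all_classical all_reals all_analysis.
From mathcomp Require Import ring lra.
Import Order.TTheory GRing.Theory Num.Theory.
Import numFieldNormedType.Exports.
Set Implicit Arguments. Unset Strict Implicit. Unset Printing Implicit Defensive.
Local Open Scope classical_set_scope.
Local Open Scope ring_scope.

Section MatrixCalculus.
Variable R : realType.

Lemma is_derive_entry m n (f : R -> 'M[R]_(m, n)) (t : R) df i j :
  is_derive t 1 f df -> is_derive t 1 (fun s => f s i j) (df i j).
Proof.
move=> [f_der <-]; have /derivable_mxP /(_ i j) fij_der := f_der.
by apply: DeriveDef => //; rewrite derive_mx // mxE.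
Qed.

Lemma is_derive_scale_const m n (h : R -> R) (C : 'M[R]_(m, n)) (t : R) dh :
  is_derive t 1 h dh -> is_derive t 1 (fun s => h s *: C) (dh *: C).
Proof.
move=> h_der.
have hC_der i j : is_derive t 1 (fun s => (h s *: C) i j) ((dh *: C) i j).
  rewrite mxE; under eq_fun do rewrite mxE.
  have := @is_deriveM R R h (cst (C i j)) t 1 dh 0 h_der (is_derive_cst _ _ _).
  by move=> hC; apply: is_derive_eq hC _; rewrite /= scaler0 add0r mulrC.
have der : derivable (fun s => h s *: C) t 1.
  by apply/derivable_mxP => i j; case: (hC_der i j).
apply: DeriveDef => //; rewrite derive_mx //; apply/matrixP => i j.
by rewrite mxE; case: (hC_der i j).
Qed.

Lemma is_derive_const_zero m n (c : 'M[R]_(m, n)) (t : R) :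
  is_derive t 1 (fun _ : R => c) 0.
Proof. exact: is_derive_cst. Qed.

Lemma is_deriveD_fun m n (f g : R -> 'M[R]_(m, n)) (t : R) df dg :
  is_derive t 1 f df -> is_derive t 1 g dg ->
  is_derive t 1 (fun s => f s + g s) (df + dg).
Proof. exact: is_deriveD. Qed.

Lemma is_deriveB_fun m n (f g : R -> 'M[R]_(m, n)) (t : R) df dg :
  is_derive t 1 f df -> is_derive t 1 g dg ->
  is_derive t 1 (fun s => f s - g s) (df - dg).
Proof. exact: is_deriveB. Qed.

Lemma is_derive_unique (W : normedModType R) (f g : R -> W) (t : R) df dg :
  is_derive t 1 f df -> is_derive t 1 g dg -> f = g -> df = dg.
Proof. by move=> [_ <-] [_ <-] ->. Qed.

Lemma derive0_constant m n (f : R -> 'M[R]_(m, n)) :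
  (forall t : R, is_derive t 1 f 0) -> forall t, f t = f 0.
Proof.
move=> f'0 t; apply/matrixP => i j.
have fij'0 (s : R) : is_derive s 1 (fun s => f s i j) 0.
  by have := is_derive_entry i j (f'0 s); rewrite mxE.
have fij_const (a b : R) : a < b -> f a i j = f b i j.
  move=> ab; have cont : {within `[a, b], continuous (fun s => f s i j)}.
    by apply: derivable_within_continuous => x _; case: (fij'0 x).
  have [c _] := MVT ab (fun x _ => fij'0 x) cont.
  by rewrite mul0r => /eqP; rewrite subr_eq0 => /eqP.
by case: (ltgtP t 0) => [/fij_const | /fij_const ->|->].
Qed.

Section Bilinear.
Variables (m1 n1 m2 n2 m3 n3 : nat).
Variable b : 'M[R]_(m1, n1) -> 'M[R]_(m2, n2) -> 'M[R]_(m3, n3).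
Hypothesis b_linl : forall a x x' y, b (a *: x + x') y = a *: b x y + b x' y.
Hypothesis b_linr : forall a x y y', b x (a *: y + y') = a *: b x y + b x y'.

Lemma bilin0l y : b 0 y = 0.
Proof.
have := b_linl 1 0 0 y; rewrite !scale1r addr0 => /eqP.
by rewrite addrC -subr_eq subrr eq_sym => /eqP.
Qed.

Lemma bilin0r x : b x 0 = 0.
Proof.
have := b_linr 1 x 0 0; rewrite !scale1r addr0 => /eqP.
by rewrite addrC -subr_eq subrr eq_sym => /eqP.
Qed.

Lemma bilin_expand x y : b x y = \sum_(i < m1) \sum_(j < n1) \sum_(k < m2) \sum_(l < n2)
  (x i j * y k l) *: b (delta_mx i j) (delta_mx k l).
Proof.
have b_suml I (r : seq I) (F : I -> _) y' : b (\sum_(i <- r) F i) y' = \sum_(i <- r) b (F i) y'.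
  apply: (big_morph (b^~ y')) => [x1 x2|]; last exact: bilin0l.
  by have := b_linl 1 x1 x2 y'; rewrite !scale1r.
have b_sumr I (r : seq I) x' (F : I -> _) : b x' (\sum_(i <- r) F i) = \sum_(i <- r) b x' (F i).
  apply: (big_morph (b x')) => [y1 y2|]; last exact: bilin0r.
  by have := b_linr 1 x' y1 y2; rewrite !scale1r.
rewrite {1}(matrix_sum_delta x) b_suml; apply: eq_bigr => i _.
rewrite b_suml; apply: eq_bigr => j _.
rewrite -[_ *: delta_mx i j]addr0 b_linl bilin0l addr0.
rewrite {1}(matrix_sum_delta y) b_sumr scaler_sumr; apply: eq_bigr => k _.
rewrite b_sumr scaler_sumr; apply: eq_bigr => l _.
by rewrite -[_ *: delta_mx k l]addr0 b_linr bilin0r addr0 scalerA.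
Qed.

Lemma is_derive_bilin (f : R -> 'M[R]_(m1, n1)) (g : R -> 'M[R]_(m2, n2)) (t : R) df dg :
  is_derive t 1 f df -> is_derive t 1 g dg ->
  is_derive t 1 (fun s => b (f s) (g s)) (b df (g t) + b (f t) dg).
Proof.
move=> f_der g_der.
have is_derive_sum_ord p (h : 'I_p -> R -> 'M[R]_(m3, n3)) dh :
    (forall i, is_derive t 1 (h i) (dh i)) ->
    is_derive t 1 (fun s => \sum_(i < p) h i s) (\sum_(i < p) dh i).
  by move=> h_der; rewrite -[fun s => _]fct_sumE; exact: is_derive_sum.
under eq_fun do rewrite bilin_expand.
rewrite (bilin_expand df) (bilin_expand (f t)) -big_split; apply: (is_derive_sum_ord) => i.
rewrite -big_split; apply: (is_derive_sum_ord) => j.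
rewrite -big_split; apply: (is_derive_sum_ord) => k.
rewrite -big_split; apply: (is_derive_sum_ord) => l.
have := @is_deriveM R R (fun s => f s i j) (fun s => g s k l) t 1 _ _
  (is_derive_entry i j f_der) (is_derive_entry k l g_der).
move=> /(is_derive_scale_const (b (delta_mx i j) (delta_mx k l))) H.
apply: is_derive_eq H _.
by rewrite /= -scalerDl; congr (_ *: _); rewrite /GRing.scale /=; ring.
Qed.

End Bilinear.

Lemma mulmx_linl m p q (a : R) (x x' : 'M[R]_(m, p)) (y : 'M[R]_(p, q)) :
  (a *: x + x') *m y = a *: (x *m y) + x' *m y.
Proof. by rewrite mulmxDl scalemxAl. Qed.

Lemma mulmx_linr m p q (a : R) (x : 'M[R]_(m, p)) (y y' : 'M[R]_(p, q)) :
  x *m (a *: y + y') = a *: (x *m y) + x *m y'.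
Proof. by rewrite mulmxDr scalemxAr. Qed.

Lemma is_derive_mulmx m p q (f : R -> 'M[R]_(m, p)) (g : R -> 'M[R]_(p, q)) (t : R) df dg :
  is_derive t 1 f df -> is_derive t 1 g dg ->
  is_derive t 1 (fun s => f s *m g s) (df *m g t + f t *m dg).
Proof. exact: (is_derive_bilin (@mulmx_linl m p q) (@mulmx_linr m p q)). Qed.

End MatrixCalculus.

Section Limits.
Variable R : realType.

Lemma cvg_mx_entries m n (u : nat -> 'M[R]_(m, n)) (L : 'M[R]_(m, n)) :
  (forall i j, (fun N => u N i j) @ \oo --> L i j) -> u @ \oo --> L.
Proof.
move=> uL; apply/cvgrPdist_le => /= e e0; near=> N.
rewrite /Num.Def.normr/= mx_normrE (bigmax_le _ (ltW e0))//= => ij _.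
rewrite !mxE/=; move: ij; near: N; apply: filter_forall => /= ij.
exact: ((cvgrPdist_le _ _).1 (uL ij.1 ij.2)).
Unshelve. all: by end_near. Qed.

Lemma cvg_mulmx_entry p m n q (A : 'M[R]_(p, m)) (B : 'M[R]_(n, q))
    (u : nat -> 'M[R]_(m, n)) L i j :
  u @ \oo --> L -> (fun N => (A *m u N *m B) i j) @ \oo --> (A *m L *m B) i j.
Proof.
move=> uL.
have entryE (M : 'M[R]_(m, n)) :
    (A *m M *m B) i j = \sum_(l < n) \sum_(k < m) A i k * M k l * B l j.
  by rewrite mxE; apply: eq_bigr => l _; rewrite mxE mulr_suml.
under eq_fun do rewrite entryE.
rewrite entryE; apply: cvg_big => [|l _]; first exact: add_continuous.
apply: cvg_big => [|k _]; first exact: add_continuous.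
apply: cvgMr_tmp; apply: cvgMl_tmp.
apply: (@continuous_cvg _ _ _ _ _ u (fun M : 'M[R]_(m, n) => M k l)) => //.
exact: coord_continuous.
Qed.

Lemma is_cvg_pseries_exp_bound (c : R^nat) (B C : R) : 0 <= C ->
  (forall k, `|c k| <= B * (C ^+ k / k`!%:R)) -> forall x, cvgn (pseries c x).
Proof.
move=> C0 c_le x.
have B0 : 0 <= B.
  by have := c_le 0%N; rewrite expr0 fact0 invr1 !mulr1; exact: le_trans.
apply: normed_cvg; apply: (@series_le_cvg _ _ (B *: exp_coeff (C * `|x|))).
- by move=> k /=.
- move=> k /=; rewrite /GRing.scale /= mulr_ge0 //.
  by apply: exp_coeff_ge0; rewrite mulr_ge0.
- move=> k /=; rewrite /GRing.scale /= /exp_coeff /= normrM normrX.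
  have -> : B *: ((C * `|x|) ^+ k / k`!%:R) = B * (C ^+ k / k`!%:R) * `|x| ^+ k.
    by rewrite /GRing.scale /= exprMn; ring.
  by rewrite ler_wpM2r ?exprn_ge0.
- exact/is_cvg_seriesZ/is_cvg_series_exp_coeff.
Qed.

End Limits.

Section MatrixExponential.
Variables (R : realType) (n : nat) (J : 'M[R]_n).

Local Notation partial_mexp t := (series (fun k : nat => (k`!%:R)^-1 *: (t *: J) ^+ k)).

Let bound : R := n%:R * \sum_(i < n) \sum_(j < n) `|J i j|.

Lemma expmx_entry_bound k i j : `|(J ^+ k) i j| <= bound ^+ k.
Proof.
have entry_le i' j' : `|J i' j'| <= \sum_(i < n) \sum_(j < n) `|J i j|.
  rewrite (bigD1 i') //= (bigD1 j') //= -addrA lerDl.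
  by rewrite addr_ge0 ?sumr_ge0 // => *; rewrite sumr_ge0.
elim: k i j => [|k IHk] i j.
  by rewrite !expr0 [1]/(1%:M) mxE; case: (i == j); rewrite ?normr1 ?normr0.
rewrite exprS -mulmxE mxE exprS; apply: le_trans (ler_norm_sum _ _ _) _.
apply: (@le_trans _ _ (\sum_(l < n) (\sum_(i < n) \sum_(j < n) `|J i j|) * bound ^+ k)).
  by apply: ler_sum => l _; rewrite normrM ler_pM.
by rewrite sumr_const card_ord -mulr_natl mulrA.
Qed.

(* [pseries (mexp_coef i j s)] is the Taylor series of the [s]-th derivative of
   the entry [(i, j)] of [t |-> mexp (t *: J)]. *)
Definition mexp_coef i j (s k : nat) : R := (k`!%:R)^-1 * (J ^+ (k + s)) i j.

Lemma pseries_diffs_mexp_coef i j s :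
  pseries_diffs (mexp_coef i j s) = mexp_coef i j s.+1.
Proof.
apply/funext => k; rewrite /pseries_diffs /mexp_coef factS natrM invfM.
by rewrite !mulrA mulfV ?mul1r ?addSnnS // pnatr_eq0.
Qed.

Lemma is_cvg_pseries_mexp_coef i j s x : cvgn (pseries (mexp_coef i j s) x).
Proof.
have bound_ge0 : 0 <= bound by rewrite mulr_ge0 // !sumr_ge0 // => *; rewrite sumr_ge0.
apply: (@is_cvg_pseries_exp_bound _ _ (bound ^+ s) _ bound_ge0) => k.
rewrite /mexp_coef normrM normfV [`|k`!%:R|]ger0_norm // mulrC mulrA -exprD addnC.
by rewrite ler_wpM2r ?invr_ge0 // expmx_entry_bound.
Qed.

Lemma mulmx_partial_mexp_entry p q (A : 'M[R]_(p, n)) (B : 'M[R]_(n, q)) t N i j :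
  (A *m partial_mexp t N *m B) i j =
  \sum_(0 <= k < N) ((k`!%:R)^-1 * t ^+ k) * (A *m J ^+ k *m B) i j.
Proof.
rewrite /series /= mulmx_sumr mulmx_suml summxE; apply: eq_bigr => k _.
have -> : (t *: J) ^+ k = t ^+ k *: J ^+ k.
  elim: (k) => [|l IHl]; first by rewrite !expr0 scale1r.
  by rewrite !exprS IHl -!mulmxE -scalemxAl -scalemxAr scalerA.
by rewrite scalerA -scalemxAr -scalemxAl mxE.
Qed.

Lemma pseries_mexp_coefEl i j s t :
  pseries (mexp_coef i j s) t = fun N => (J ^+ s *m partial_mexp t N *m 1%:M) i j.
Proof.
apply/funext => N; rewrite mulmx_partial_mexp_entry; apply: eq_bigr => k _.
by rewrite /= /mexp_coef mulmx1 mulmxE -exprD addnC; ring.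
Qed.

Lemma pseries_mexp_coefEr i j s t :
  pseries (mexp_coef i j s) t = fun N => (1%:M *m partial_mexp t N *m J ^+ s) i j.
Proof.
apply/funext => N; rewrite mulmx_partial_mexp_entry; apply: eq_bigr => k _.
by rewrite /= /mexp_coef mul1mx mulmxE -exprD; ring.
Qed.

Lemma cvg_partial_mexp_entries t :
  partial_mexp t @ \oo --> \matrix_(i, j) limn (pseries (mexp_coef i j 0) t).
Proof.
apply: cvg_mx_entries => i j; rewrite mxE.
rewrite [X in X @ _ --> _](_ : _ = pseries (mexp_coef i j 0) t).
  exact: is_cvg_pseries_mexp_coef.
by rewrite pseries_mexp_coefEl expr0 /=; apply/funext => N; rewrite mul1mx mulmx1.
Qed.

Lemma mexp_entries t : mexp (t *: J) = \matrix_(i, j) limn (pseries (mexp_coef i j 0) t).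
Proof. exact/cvg_lim/cvg_partial_mexp_entries. Qed.

Lemma cvg_mexp t : partial_mexp t @ \oo --> mexp (t *: J).
Proof. by rewrite mexp_entries; exact: cvg_partial_mexp_entries. Qed.

Lemma lim_pseries_mexp_coef1 i j t :
  limn (pseries (mexp_coef i j 1) t) = (J *m mexp (t *: J)) i j.
Proof.
apply: cvg_lim => //; rewrite pseries_mexp_coefEl expr1 -[J *m _]mulmx1.
exact/cvg_mulmx_entry/cvg_mexp.
Qed.

Lemma comm_mx_mexp t : comm_mx J (mexp (t *: J)).
Proof.
apply/matrixP => i j; rewrite -lim_pseries_mexp_coef1.
apply: cvg_lim => //; rewrite pseries_mexp_coefEr expr1 -[_ *m J]mul1mx mulmxA.
exact/cvg_mulmx_entry/cvg_mexp.
Qed.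

Lemma is_derive_mexp (t : R) :
  is_derive t 1 (fun s => mexp (s *: J)) (mexp (t *: J) *m J).
Proof.
have entry_der i j : is_derive t 1 (fun s => (mexp (s *: J)) i j)
    (limn (pseries (mexp_coef i j 1) t)).
  under eq_fun do rewrite mexp_entries mxE.
  rewrite -pseries_diffs_mexp_coef; apply: (@pseries_snd_diffs _ _ (`|t| + 1)).
  - exact: is_cvg_pseries_mexp_coef.
  - rewrite pseries_diffs_mexp_coef; exact: is_cvg_pseries_mexp_coef.
  - rewrite !pseries_diffs_mexp_coef; exact: is_cvg_pseries_mexp_coef.
  - by rewrite [ltRHS]ger0_norm ?ltrDl // addr_ge0.
have der : derivable (fun s : R => mexp (s *: J)) t 1.
  by apply/derivable_mxP => i j; case: (entry_der i j).
apply: DeriveDef => //; rewrite derive_mx // -comm_mx_mexp; apply/matrixP => i j.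
by rewrite -lim_pseries_mexp_coef1 mxE; case: (entry_der i j).
Qed.

Lemma mulmx_mexp_eq0 p q (A : 'M[R]_(p, n)) (B : 'M[R]_(n, q)) t :
  (forall k, A *m J ^+ k *m B = 0) -> A *m mexp (t *: J) *m B = 0.
Proof.
move=> AJB0; apply/matrixP => i j; rewrite [RHS]mxE.
have := cvg_mulmx_entry (A := A) (B := B) (i := i) (j := j) (cvg_mexp (t := t)).
have -> : (fun N => (A *m partial_mexp t N *m B) i j) = cst 0.
  by apply/funext => N; rewrite mulmx_partial_mexp_entry big1 // => k _; rewrite AJB0 mxE mulr0.
by move/(cvg_lim (@Rhausdorff R)) => <-; rewrite lim_cst.
Qed.

End MatrixExponential.

Section TwoStepNilpotent.
Variables (R : realType) (n : nat) (G : 'M[R]_n) (br : 'rV[R]_n -> 'rV[R]_n -> 'rV[R]_n)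
  (Jm : 'rV[R]_n -> 'M[R]_n).
Hypotheses (hG : inner_product G) (hbr : two_step_nilpotent br)
  (hZ : center_nondeg G br) (hJ : is_J G br Jm).
Local Notation V := 'rV[R]_n.
Local Notation C := (ncenter br).
Local Notation Vp := (vpart G br).

Lemma br_linl a (x y w : V) : br (a *: x + y) w = a *: br x w + br y w.
Proof. by case: hbr. Qed.

Lemma br_skew (x y : V) : br x y = - br y x.
Proof. by case: hbr. Qed.

Lemma br_linr a (x y w : V) : br w (a *: x + y) = a *: br w x + br w y.
Proof. by rewrite br_skew br_linl (br_skew w x) (br_skew w y) scalerN opprD. Qed.

Lemma br0l (y : V) : br 0 y = 0. Proof. exact (bilin0l br_linl y). Qed.
Lemma br0r (x : V) : br x 0 = 0. Proof. by rewrite br_skew br0l oppr0. Qed.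
Lemma brDl (x x' y : V) : br (x + x') y = br x y + br x' y.
Proof. by have := br_linl 1 x x' y; rewrite !scale1r. Qed.
Lemma brDr (x y y' : V) : br x (y + y') = br x y + br x y'.
Proof. by have := br_linr 1 y y' x; rewrite !scale1r. Qed.
Lemma brZl a (x y : V) : br (a *: x) y = a *: br x y.
Proof. by have := br_linl a x 0 y; rewrite addr0 br0l addr0. Qed.
Lemma brZr a (x y : V) : br x (a *: y) = a *: br x y.
Proof. by have := br_linr a y 0 x; rewrite addr0 br0r addr0. Qed.
Lemma brNl (x y : V) : br (- x) y = - br x y.
Proof. by rewrite -scaleN1r brZl scaleN1r. Qed.
Lemma brNr (x y : V) : br x (- y) = - br x y.
Proof. by rewrite -scaleN1r brZr scaleN1r. Qed.
Lemma brBr (x y y' : V) : br x (y - y') = br x y - br x y'.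
Proof. by rewrite brDr brNr. Qed.

Lemma br_suml I (r : seq I) (F : I -> V) y :
  br (\sum_(i <- r) F i) y = \sum_(i <- r) br (F i) y.
Proof. exact: (big_morph (br^~ y) (fun x x' => brDl x x' y) (br0l y)). Qed.

Lemma br_sumr I (r : seq I) x (F : I -> V) :
  br x (\sum_(i <- r) F i) = \sum_(i <- r) br x (F i).
Proof. exact: (big_morph (br x) (brDr x) (br0r x)). Qed.

Lemma brxx (x : V) : br x x = 0.
Proof.
have : 2%:R *: br x x = 0 by rewrite scaler_nat mulr2n {1}br_skew addNr.
by move/eqP; rewrite scaler_eq0 pnatr_eq0 => /eqP.
Qed.

Lemma ip_linl a (x y w : V) : ip G (a *: x + y) w = a * ip G x w + ip G y w.
Proof. by rewrite /ip !mulmxDl -!scalemxAl !mxE. Qed.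

Lemma ipC (x y : V) : ip G x y = ip G y x.
Proof.
case: hG => GT _.
have entry_tr (A : 'M[R]_1) : A 0 0 = A^T 0 0 by rewrite mxE.
by rewrite /ip entry_tr !trmx_mul trmxK GT mulmxA.
Qed.

Lemma ip_linr a (x y w : V) : ip G w (a *: x + y) = a * ip G w x + ip G w y.
Proof. by rewrite ipC ip_linl !(ipC w). Qed.

Lemma ip0l (w : V) : ip G 0 w = 0. Proof. by rewrite /ip !mul0mx mxE. Qed.
Lemma ip0r (w : V) : ip G w 0 = 0. Proof. by rewrite ipC ip0l. Qed.
Lemma ipDl (x y w : V) : ip G (x + y) w = ip G x w + ip G y w.
Proof. by have := ip_linl 1 x y w; rewrite !scale1r mul1r. Qed.
Lemma ipDr (x y w : V) : ip G w (x + y) = ip G w x + ip G w y.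
Proof. by have := ip_linr 1 x y w; rewrite !scale1r mul1r. Qed.
Lemma ipZl a (x w : V) : ip G (a *: x) w = a * ip G x w.
Proof. by have := ip_linl a x 0 w; rewrite addr0 ip0l addr0. Qed.
Lemma ipZr a (x w : V) : ip G w (a *: x) = a * ip G w x.
Proof. by have := ip_linr a x 0 w; rewrite addr0 ip0r addr0. Qed.
Lemma ipNl (x w : V) : ip G (- x) w = - ip G x w.
Proof. by rewrite -scaleN1r ipZl mulN1r. Qed.
Lemma ipNr (x w : V) : ip G w (- x) = - ip G w x.
Proof. by rewrite -scaleN1r ipZr mulN1r. Qed.
Lemma ipBl (x y w : V) : ip G (x - y) w = ip G x w - ip G y w.
Proof. by rewrite ipDl ipNl. Qed.

Lemma ip_nondeg (x : V) : (forall w, ip G x w = 0) -> x = 0.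
Proof.
move=> x_perp; case: hG => _ G_unit.
have xG0 : x *m G = 0.
  by apply/rowP => j; have := x_perp (delta_mx 0 j); rewrite /ip trmx_delta -colE !mxE.
by rewrite -(mulmxK G_unit x) xG0 mul0mx.
Qed.

Lemma ncenter0 : C 0. Proof. by move=> x; rewrite br0l. Qed.
Lemma ncenterD x y : C x -> C y -> C (x + y).
Proof. by move=> Cx Cy w; rewrite brDl Cx Cy addr0. Qed.
Lemma ncenterZ a x : C x -> C (a *: x).
Proof. by move=> Cx w; rewrite brZl Cx scaler0. Qed.
Lemma ncenterN x : C x -> C (- x).
Proof. by move=> Cx w; rewrite brNl Cx oppr0. Qed.
Lemma ncenterB x y : C x -> C y -> C (x - y).
Proof. by move=> Cx Cy; apply/ncenterD/ncenterN. Qed.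
Lemma ncenter_br x y : C (br x y).
Proof. by case: hbr => _ _ br_br _ w; apply: br_br. Qed.
Lemma br_ncenterr x w : C w -> br x w = 0.
Proof. by move=> Cw; rewrite br_skew Cw oppr0. Qed.

Lemma vpart0 : Vp 0. Proof. by move=> w _; rewrite ip0r. Qed.
Lemma vpartD x y : Vp x -> Vp y -> Vp (x + y).
Proof. by move=> Vx Vy w Cw; rewrite ipDr Vx // Vy // addr0. Qed.
Lemma vpartZ a x : Vp x -> Vp (a *: x).
Proof. by move=> Vx w Cw; rewrite ipZr Vx // mulr0. Qed.
Lemma vpartN x : Vp x -> Vp (- x).
Proof. by move=> Vx w Cw; rewrite ipNr Vx // oppr0. Qed.
Lemma vpart_J x a : Vp x -> C a -> Vp (x *m Jm a).
Proof. by move=> Vx Ca; case: (hJ Ca Vx). Qed.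
Lemma ip_vpart_ncenter x w : Vp x -> C w -> ip G x w = 0.
Proof. by move=> Vx Cw; rewrite ipC Vx. Qed.

Lemma ncenter_vpart_eq0 x : C x -> Vp x -> x = 0.
Proof. by move=> Cx Vx; apply: hZ => // w Cw; rewrite ipC Vx. Qed.

Lemma ncenter_vpart_add_eq0 c w : C c -> Vp w -> c + w = 0 <-> c = 0 /\ w = 0.
Proof.
move=> Cc Vw; split=> [cw0 | [-> ->]]; last by rewrite addr0.
have c0 : c = 0.
  by apply: ncenter_vpart_eq0 => //; rewrite -[c]opprK (addr0_eq cw0); exact: vpartN.
by split => //; move: cw0; rewrite c0 add0r.
Qed.

Definition br_mx (k : 'I_n) : 'M[R]_n :=
  \matrix_(i, j) (br (delta_mx 0 i) (delta_mx 0 k)) 0 j.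

Lemma mul_br_mx x k : x *m br_mx k = br x (delta_mx 0 k).
Proof.
apply/rowP => j; rewrite mxE {2}(row_sum_delta x) br_suml summxE.
by apply: eq_bigr => i _; rewrite brZl !mxE.
Qed.

Definition center_base : 'M[R]_(\rank (\bigcap_(k < n) kermx (br_mx k)), n) :=
  row_base (\bigcap_(k < n) kermx (br_mx k))%MS.

Lemma ncenter_sub_base x : C x <-> (x <= center_base)%MS.
Proof.
rewrite /center_base eq_row_base; split.
  by move=> Cx; apply/sub_bigcapmxP => k _; rewrite sub_kermx mul_br_mx Cx.
move/sub_bigcapmxP => x_ker y; rewrite (row_sum_delta y).
rewrite br_sumr big1 // => k _.
by rewrite brZr -mul_br_mx; move: (x_ker k isT); rewrite sub_kermx => /eqP ->; rewrite scaler0.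
Qed.

Lemma center_gram_unit : center_base *m G *m center_base^T \in unitmx.
Proof.
rewrite -row_free_unit -kermx_eq0; apply/eqP/row_matrixP => i; rewrite row0.
set u := row i _.
have uM0 : u *m (center_base *m G *m center_base^T) = 0.
  by rewrite /u -row_mul mulmx_ker row0.
have : u *m center_base = 0.
  apply: hZ; first by apply/ncenter_sub_base; exact: submxMl.
  move=> w /ncenter_sub_base /submxP [d ->]; rewrite /ip trmx_mul.
  have -> : u *m center_base *m G *m (center_base^T *m d^T) =
             u *m (center_base *m G *m center_base^T) *m d^T by rewrite !mulmxA.
  by rewrite uM0 mul0mx mxE.
by move/eqP; rewrite mulmx_free_eq0 ?row_base_free // => /eqP.
Qed.

(* The orthogonal projection onto the centre, written with its Gram matrix. *)
Lemma ncenter_vpart_decomp (x : V) : exists xc, C xc /\ Vp (x - xc).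
Proof.
set M := center_base *m G *m center_base^T.
exists (x *m G *m center_base^T *m invmx M *m center_base); split.
  by apply/ncenter_sub_base; exact: submxMl.
move=> c /ncenter_sub_base /submxP [d ->]; rewrite ipC /ip [(d *m _)^T]trmx_mul.
suff proj0 : (x - x *m G *m center_base^T *m invmx M *m center_base) *m G *m center_base^T = 0.
  by rewrite mulmxA proj0 mul0mx mxE.
rewrite !mulmxBl.
have -> : x *m G *m center_base^T *m invmx M *m center_base *m G *m center_base^T
        = x *m G *m center_base^T *m invmx M *m M by rewrite /M !mulmxA.
by rewrite mulmxKV ?center_gram_unit // subrr.
Qed.

Lemma vpart_ip_eq0 (x : V) : Vp x -> (forall y, Vp y -> ip G x y = 0) -> x = 0.
Proof.
move=> Vx x_perp; apply: ip_nondeg => w; have [wc [Cwc Vw]] := ncenter_vpart_decomp w.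
have -> : w = wc + (w - wc) by rewrite addrC subrK.
by rewrite ipDr ip_vpart_ncenter // x_perp // add0r.
Qed.

Lemma ip_Jm p a y : Vp p -> C a -> Vp y -> ip G (p *m Jm a) y = ip G a (br p y).
Proof. by move=> Vp_p Ca Vy; case: (hJ Ca Vp_p) => _ ->. Qed.

Lemma Jm_linear s a b p : C a -> C b -> Vp p ->
  p *m Jm (s *: a + b) = s *: (p *m Jm a) + p *m Jm b.
Proof.
move=> Ca Cb Vp_p; apply/eqP; rewrite -subr_eq0; apply/eqP.
have Cab : C (s *: a + b) by apply: ncenterD => //; apply: ncenterZ.
apply: vpart_ip_eq0.
  by apply/vpartD/vpartN/vpartD; [| apply/vpartZ |]; apply: vpart_J.
by move=> y Vy; rewrite ipDl ipNl ipDl ipZl !ip_Jm // ip_linl subrr.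
Qed.

Lemma Jm0 p : Vp p -> p *m Jm 0 = 0.
Proof.
move=> Vp_p; apply: vpart_ip_eq0 => [|y Vy]; first exact/vpart_J/ncenter0.
by rewrite ip_Jm ?ip0l //; exact: ncenter0.
Qed.

Lemma JmD a b p : C a -> C b -> Vp p -> p *m Jm (a + b) = p *m Jm a + p *m Jm b.
Proof. by move=> Ca Cb Vp_p; have := Jm_linear 1 Ca Cb Vp_p; rewrite !scale1r. Qed.

Lemma JmZ s a p : C a -> Vp p -> p *m Jm (s *: a) = s *: (p *m Jm a).
Proof. by move=> Ca Vp_p; have := Jm_linear s Ca ncenter0 Vp_p; rewrite !addr0 Jm0 // addr0. Qed.

Lemma JmN a p : C a -> Vp p -> p *m Jm (- a) = - (p *m Jm a).
Proof. by move=> Ca Vp_p; rewrite -scaleN1r JmZ // scaleN1r. Qed.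

Lemma JmB a b p : C a -> C b -> Vp p -> p *m Jm (a - b) = p *m Jm a - p *m Jm b.
Proof. by move=> Ca Cb Vp_p; rewrite JmD ?JmN //; exact: ncenterN. Qed.

Lemma koszul_linX a X X' Y Z :
  koszul G br (a *: X + X') Y Z = a * koszul G br X Y Z + koszul G br X' Y Z.
Proof. rewrite /koszul br_linl br_linr !(ip_linl, ip_linr); ring. Qed.

Lemma koszul_linY a X Y Y' Z :
  koszul G br X (a *: Y + Y') Z = a * koszul G br X Y Z + koszul G br X Y' Z.
Proof. rewrite /koszul br_linl br_linr !(ip_linl, ip_linr); ring. Qed.

Lemma koszul_linZ a X Y Z Z' :
  koszul G br X Y (a *: Z + Z') = a * koszul G br X Y Z + koszul G br X Y Z'.
Proof. rewrite /koszul br_linr br_linl !(ip_linl, ip_linr); ring. Qed.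

Lemma ip_nabla X Y Z : ip G (nabla G br X Y) Z = koszul G br X Y Z.
Proof.
have koszul_rowE : koszul G br X Y Z = \sum_(j < n) Z 0 j * koszul G br X Y (delta_mx 0 j).
  have koszul0 : koszul G br X Y 0 = 0.
    by rewrite /koszul br0r br0l !(ip0l, ip0r) subrr addr0 mulr0.
  have koszulD Z1 Z2 : koszul G br X Y (Z1 + Z2) = koszul G br X Y Z1 + koszul G br X Y Z2.
    by have := koszul_linZ 1 X Y Z1 Z2; rewrite scale1r mul1r.
  rewrite {1}(row_sum_delta Z) (big_morph (koszul G br X Y) koszulD koszul0).
  apply: eq_bigr => j _.
  by have := koszul_linZ (Z 0 j) X Y (delta_mx 0 j) 0; rewrite addr0 koszul0 addr0.
case: hG => _ G_unit; rewrite /nabla /ip mulmxKV // mxE koszul_rowE.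
by apply: eq_bigr => j _; rewrite !mxE mulrC.
Qed.

Lemma nabla_unique X Y W :
  (forall Z, ip G W Z = koszul G br X Y Z) -> nabla G br X Y = W.
Proof.
move=> W_koszul; apply/eqP; rewrite -subr_eq0; apply/eqP; apply: ip_nondeg => Z.
by rewrite ipBl ip_nabla W_koszul subrr.
Qed.

Lemma nabla_linl a X X' Y :
  nabla G br (a *: X + X') Y = a *: nabla G br X Y + nabla G br X' Y.
Proof. by apply: nabla_unique => Z; rewrite ip_linl !ip_nabla koszul_linX. Qed.

Lemma nabla_linr a X Y Y' :
  nabla G br X (a *: Y + Y') = a *: nabla G br X Y + nabla G br X Y'.
Proof. by apply: nabla_unique => Z; rewrite ip_linl !ip_nabla koszul_linY. Qed.

(* The equations on [X] and [Y] let [apply] match sums that are not literally [a + p]. *)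
Lemma nablaE X Y a p b q : C a -> C b -> Vp p -> Vp q -> X = a + p -> Y = b + q ->
  nabla G br X Y = 2^-1 *: br p q - 2^-1 *: (q *m Jm a) - 2^-1 *: (p *m Jm b).
Proof.
move=> Ca Cb Vp_p Vq -> ->; apply: nabla_unique => Z.
have [Zc [CZc VZ]] := ncenter_vpart_decomp Z.
have -> : Z = Zc + (Z - Zc) by rewrite addrC subrK.
move: (Z - Zc) VZ => Zv VZv.
have br_ap_bq : br (a + p) (b + q) = br p q by rewrite brDl !brDr !Ca (br_ncenterr _ Cb) !add0r.
have br_bq_Z : br (b + q) (Zc + Zv) = br q Zv by rewrite brDl !brDr !Cb (br_ncenterr _ CZc) !add0r.
have br_Z_ap : br (Zc + Zv) (a + p) = br Zv p by rewrite brDl !brDr !CZc (br_ncenterr _ Ca) !add0r.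
rewrite /koszul br_ap_bq br_bq_Z br_Z_ap !(ipDl, ipDr, ipBl, ipNl, ipZl).
rewrite (VZv _ (ncenter_br p q)) !(ip_vpart_ncenter (vpart_J _ _) CZc) // !ip_Jm //.
rewrite (Vp_p _ (ncenter_br q Zv)) (Vq _ (ncenter_br Zv p)).
rewrite (ipC (br q Zv) a) (ipC (br Zv p) b) (br_skew Zv p) ipNr.
ring.
Qed.

Ltac solve_split := repeat (first [ assumption | apply: ncenter0 | apply: vpart0
  | apply: ncenter_br | apply: ncenterD | apply: ncenterN | apply: ncenterZ
  | apply: vpartD | apply: vpartN | apply: vpartZ | apply: vpart_J ]).

Ltac normalize_split :=
  rewrite ?(brDl, brDr, brBr, brNr, brZr, brNl, brZl);
  rewrite ?(mulmxDl, mulmxBl, mulNmx, scaler0, oppr0, addr0, subr0);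
  rewrite -?scalemxAl;
  rewrite ?JmB ?JmD ?JmN ?JmZ //; try solve [solve_split];
  rewrite ?Jm0 //; rewrite ?JmN //; try solve [solve_split];
  apply/rowP => k; rewrite !mxE; lra.

Lemma curv_split a b p q : C a -> C b -> Vp p -> Vp q ->
  curv G br (b + q) (a + p) (a + p) =
    (4^-1 *: br p (q *m Jm a) + 4^-1 *: br p (p *m Jm b) - 2^-1 *: br q (p *m Jm a))
  + (2^-1 *: (p *m Jm a *m Jm b) - 4^-1 *: (p *m Jm b *m Jm a)
     - 4^-1 *: (q *m Jm a *m Jm a) + (3 / 4) *: (p *m Jm (br q p))).
Proof.
move=> Ca Cb Vp_p Vq.
have nabla_XX : nabla G br (a + p) (a + p) = - (p *m Jm a).
  rewrite (nablaE Ca Ca Vp_p Vp_p) // brxx; apply/rowP => k; rewrite !mxE; lra.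
have nabla_YX : nabla G br (b + q) (a + p) =
    2^-1 *: br q p - 2^-1 *: (p *m Jm b) - 2^-1 *: (q *m Jm a).
  exact: nablaE.
have nabla_Y_XX : nabla G br (b + q) (nabla G br (a + p) (a + p)) =
    2^-1 *: br q (- (p *m Jm a)) - 2^-1 *: (- (p *m Jm a) *m Jm b) - 2^-1 *: (q *m Jm 0).
  by apply: nablaE => //; solve_split; rewrite nabla_XX add0r.
have nabla_X_YX : nabla G br (a + p) (nabla G br (b + q) (a + p)) =
    2^-1 *: br p (- (2^-1 *: (p *m Jm b)) - 2^-1 *: (q *m Jm a))
    - 2^-1 *: ((- (2^-1 *: (p *m Jm b)) - 2^-1 *: (q *m Jm a)) *m Jm a)
    - 2^-1 *: (p *m Jm (2^-1 *: br q p)).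
  apply: nablaE => //; solve_split.
  by rewrite nabla_YX; apply/rowP => k; rewrite !mxE; lra.
have br_YX : br (b + q) (a + p) = br q p.
  by rewrite brDl !brDr !Cb (br_ncenterr _ Ca) !add0r.
have nabla_brYX : nabla G br (br q p) (a + p) = - 2^-1 *: (p *m Jm (br q p)).
  rewrite (nablaE (ncenter_br q p) Ca vpart0 Vp_p) ?addr0 // br0l mul0mx.
  by apply/rowP => k; rewrite !mxE; lra.
rewrite /curv nabla_Y_XX nabla_X_YX br_YX nabla_brYX Jm0 //.
normalize_split.
Qed.

Lemma covD2E (c Y dY : R -> V) (t : R) dc ddY :
  is_derive t 1 c dc -> (forall s : R, is_derive s 1 Y (dY s)) -> is_derive t 1 dY ddY ->
  covD G br c (covD G br c Y) t =
  ddY + (nabla G br dc (Y t) + nabla G br (c t) (dY t))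
  + nabla G br (c t) (dY t + nabla G br (c t) (Y t)).
Proof.
move=> c_der Y_der dY_der.
have covDE : covD G br c Y = fun s => dY s + nabla G br (c s) (Y s).
  by apply/funext => s; rewrite /covD derive1E; case: (Y_der s) => _ ->.
rewrite {1}/covD derive1E covDE.
have := is_deriveD_fun dY_der (is_derive_bilin nabla_linl nabla_linr c_der (Y_der t)).
by case=> _ ->.
Qed.

(* The left-hand side is [covD2E] for the velocity [a + p] (with derivative [p J]) and
   the field [b + q], with derivatives [b' + (r + q J)] and [b'' + (s + 2 r J + q J^2)],
   where [J = Jm a] acts on the right. *)
Lemma jacobi_operator_split a b b' b'' p q r s :
  C a -> C b -> C b' -> C b'' -> Vp p -> Vp q -> Vp r -> Vp s ->
  (b'' + (s + (r *m Jm a + r *m Jm a) + q *m Jm a *m Jm a))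
  + (nabla G br (p *m Jm a) (b + q) + nabla G br (a + p) (b' + (r + q *m Jm a)))
  + nabla G br (a + p) (b' + (r + q *m Jm a) + nabla G br (a + p) (b + q))
  + curv G br (b + q) (a + p) (a + p)
  = (b'' - (br (r + q *m Jm a) p + br q (p *m Jm a)))
    + (s + r *m Jm a - p *m Jm (b' - br q p)).
Proof.
move=> Ca Cb Cb' Cb'' Vp_p Vq Vr Vs.
have nabla_dXY : nabla G br (p *m Jm a) (b + q) =
    2^-1 *: br (p *m Jm a) q - 2^-1 *: (q *m Jm 0) - 2^-1 *: (p *m Jm a *m Jm b).
  by apply: nablaE => //; solve_split; rewrite add0r.
have nabla_XdY : nabla G br (a + p) (b' + (r + q *m Jm a)) =
    2^-1 *: br p (r + q *m Jm a) - 2^-1 *: ((r + q *m Jm a) *m Jm a) - 2^-1 *: (p *m Jm b').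
  by apply: nablaE => //; solve_split.
have nabla_XY : nabla G br (a + p) (b + q) =
    2^-1 *: br p q - 2^-1 *: (q *m Jm a) - 2^-1 *: (p *m Jm b).
  exact: nablaE.
have nabla_X_DY : nabla G br (a + p) (b' + (r + q *m Jm a) + nabla G br (a + p) (b + q)) =
    2^-1 *: br p (r + q *m Jm a - 2^-1 *: (q *m Jm a) - 2^-1 *: (p *m Jm b))
    - 2^-1 *: ((r + q *m Jm a - 2^-1 *: (q *m Jm a) - 2^-1 *: (p *m Jm b)) *m Jm a)
    - 2^-1 *: (p *m Jm (b' + 2^-1 *: br p q)).
  apply: (nablaE (b := b' + 2^-1 *: br p q)) => //; solve_split.
  by rewrite nabla_XY; apply/rowP => k; rewrite !mxE; lra.
rewrite nabla_dXY nabla_XdY nabla_X_DY curv_split //.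
rewrite (br_skew q p) (br_skew (p *m Jm a) q) Jm0 // !(brDl, brDr, brBr, brNr, brZr).
rewrite (br_skew r p) (br_skew (q *m Jm a) p).
normalize_split.
Qed.

Lemma ncenter_derive (f : R -> V) (t : R) df :
  (forall s, C (f s)) -> is_derive t 1 f df -> C df.
Proof.
move=> Cf f_der x.
have := is_derive_bilin br_linl (fun a y y' w => br_linr a y' w y) f_der (is_derive_cst x t 1).
move/is_derive_unique => /(_ _ _ (is_derive_cst 0 t 1)); rewrite br0r addr0; apply.
by apply/funext => s; rewrite Cf.
Qed.

Lemma vpart_derive (f : R -> V) (t : R) df :
  (forall s, Vp (f s)) -> is_derive t 1 f df -> Vp df.
Proof.
move=> Vf f_der c Cc.
have := is_derive_entry 0 0 (is_derive_mulmx f_der (is_derive_cst (G *m c^T) t 1)).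
move/is_derive_unique => /(_ _ _ (is_derive_cst 0 t 1)).
rewrite mulmx0 addr0 ipC /ip mulmxA; apply.
by apply/funext => s; rewrite /= mulmxA -/(ip G (f s) c) ipC Vf.
Qed.

Lemma vpart_mulmx_mexp a x t : C a -> Vp x -> Vp (x *m mexp (t *: Jm a)).
Proof.
move=> Ca Vx c Cc; rewrite ipC /ip -mulmxA.
suff -> : x *m mexp (t *: Jm a) *m (G *m c^T) = 0 by rewrite mxE.
apply: mulmx_mexp_eq0 => k; apply/matrixP => i j; rewrite !ord1 mulmxA.
suff Vxk : Vp (x *m Jm a ^+ k) by rewrite -/(ip G (x *m Jm a ^+ k) c) ipC Vxk // mxE.
elim: k => [|k IHk]; first by rewrite expr0 mulmx1.
by rewrite exprSr -mulmxE mulmxA; exact: vpart_J.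
Qed.

End TwoStepNilpotent.

Lemma is_derive_smooth (R : realType) n (f : R -> 'rV[R]_n) k (t : R) :
  smooth f -> is_derive t 1 (derive1n k f) (derive1n k.+1 f t).
Proof. by move=> /(_ k t) /derivableP; rewrite -derive1E. Qed.

Section JacobiField.
Variables (R : realType) (n : nat) (G : 'M[R]_n) (br : 'rV[R]_n -> 'rV[R]_n -> 'rV[R]_n)
  (Jm : 'rV[R]_n -> 'M[R]_n).
Hypotheses (hG : inner_product G) (hbr : two_step_nilpotent br)
  (hZ : center_nondeg G br) (hJ : is_J G br Jm).
Variables (z0 x0 : 'rV[R]_n) (z v : R -> 'rV[R]_n).
Hypotheses (hz0 : ncenter br z0) (hx0 : vpart G br x0) (hzs : smooth z) (hvs : smooth v)
  (hz : forall t, ncenter br (z t)) (hv : forall t, vpart G br (v t)).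
Local Notation C := (ncenter br).
Local Notation Vp := (vpart G br).
Local Notation J := (Jm z0).
Local Notation E t := (mexp (t *: Jm z0)).
Local Notation x' t := (x0 *m E t).
Local Notation zeta t := (derive1 z t - br (v t *m E t) (x' t)).

Let z' (t : R) : is_derive t 1 z (derive1 z t) := is_derive_smooth 0 t hzs.
Let z'' (t : R) : is_derive t 1 (derive1 z) (derive1n 2 z t) := is_derive_smooth 1 t hzs.
Let v' (t : R) : is_derive t 1 v (derive1 v t) := is_derive_smooth 0 t hvs.
Let v'' (t : R) : is_derive t 1 (derive1 v) (derive1n 2 v t) := is_derive_smooth 1 t hvs.
Let E' (t : R) : is_derive t 1 (fun s => E s) (E t *m J) := is_derive_mexp J t.

Let vE' (t : R) : is_derive t 1 (fun s => v s *m E s) (derive1 v t *m E t + v t *m E t *m J).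
Proof. by rewrite -mulmxA; exact: is_derive_mulmx. Qed.

Let x'' (t : R) : is_derive t 1 (fun s => x' s) (x' t *m J).
Proof.
have := is_derive_mulmx (is_derive_const_zero x0 t) (E' t).
by rewrite mul0mx add0r mulmxA.
Qed.

Lemma is_derive_zeta (t : R) : is_derive t 1 (fun s => zeta s)
  (derive1n 2 z t
   - (br (derive1 v t *m E t + v t *m E t *m J) (x' t) + br (v t *m E t) (x' t *m J))).
Proof.
have br_linr' a y y' w := br_linr hbr a y' w y.
exact: is_deriveB_fun (z'' t) (is_derive_bilin (br_linl hbr) br_linr' (vE' t) (x'' t)).
Qed.

Lemma ncenter_zeta (t : R) : C (zeta t).
Proof. exact (ncenterB hbr (ncenter_derive hbr hz (z' t)) (ncenter_br hbr _ _)). Qed.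

Let ncenter_derive_zeta (t : R) : C (derive1 (fun s => zeta s) t).
Proof.
have [_ zeta'E] := is_derive_zeta t; rewrite -derive1E in zeta'E.
by rewrite zeta'E; exact (ncenter_derive hbr ncenter_zeta (is_derive_zeta t)).
Qed.

Let vpart_E y (t : R) : Vp y -> Vp (y *m E t).
Proof. exact: (vpart_mulmx_mexp hG hJ t hz0). Qed.

Let vpart_v' (t : R) : Vp (derive1 v t) := vpart_derive hG hv (v' t).

Lemma jacobi_operatorE (t : R) :
  covD G br (fun s => z0 + x' s) (covD G br (fun s => z0 + x' s) (fun s => z s + v s *m E s)) t
  + curv G br (z t + v t *m E t) (z0 + x' t) (z0 + x' t)
  = derive1 (fun s => zeta s) t
    + (derive1n 2 v t *m E t + derive1 v t *m E t *m J - x' t *m Jm (zeta t)).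
Proof.
have Y' (s : R) : is_derive s 1 (fun s => z s + v s *m E s)
    (derive1 z s + (derive1 v s *m E s + v s *m E s *m J)).
  exact: is_deriveD_fun (z' s) (vE' s).
have Y'' : is_derive t 1 (fun s => derive1 z s + (derive1 v s *m E s + v s *m E s *m J))
    (derive1n 2 z t + (derive1n 2 v t *m E t + (derive1 v t *m E t *m J
      + derive1 v t *m E t *m J) + v t *m E t *m J *m J)).
  apply: is_derive_eq; first apply: (is_deriveD_fun (z'' t)); first apply: is_deriveD_fun.
  - exact: is_derive_mulmx (v'' t) (E' t).
  - exact: is_derive_mulmx (vE' t) (is_derive_const_zero J t).
  by rewrite mulmx0 addr0 mulmxDl !mulmxA !addrA.
have c' : is_derive t 1 (fun s => z0 + x' s) (x' t *m J).
  by have := is_deriveD_fun (is_derive_const_zero z0 t) (x'' t); rewrite add0r.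
have Cz' : C (derive1 z t) := ncenter_derive hbr hz (z' t).
have Cz'' : C (derive1n 2 z t) :=
  ncenter_derive hbr (fun s => ncenter_derive hbr hz (z' s)) (z'' t).
have Vv'' : Vp (derive1n 2 v t) := vpart_derive hG vpart_v' (v'' t).
have [_ zeta'E] := is_derive_zeta t; rewrite -derive1E in zeta'E.
rewrite (covD2E hG hbr c' Y' Y'') zeta'E.
by apply: (jacobi_operator_split hG hbr hZ hJ) => //; exact: vpart_E.
Qed.

Lemma is_jacobi_iff :
  is_jacobi G br (fun s => z0 + x' s) (fun s => z s + v s *m E s) <->
  forall t, derive1 (fun s => zeta s) t = 0 /\
    derive1n 2 v t *m E t + derive1 v t *m E t *m J - x' t *m Jm (zeta t) = 0.
Proof.
have V_rest (t : R) : Vp (derive1n 2 v t *m E t + derive1 v t *m E t *m J - x' t *m Jm (zeta t)).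
  have VvE'' := vpart_E t (vpart_derive hG vpart_v' (v'' t)).
  have VvE'J := vpart_J hJ (vpart_E t (vpart_v' t)) hz0.
  have Vx'J := vpart_J hJ (vpart_E t hx0) (ncenter_zeta t).
  exact (vpartD hG (vpartD hG VvE'' VvE'J) (vpartN hG Vx'J)).
have split_eq0 t := ncenter_vpart_add_eq0 hG hZ (ncenter_derive_zeta t) (V_rest t).
split=> jac t; first by apply/split_eq0; rewrite -jacobi_operatorE.
by rewrite jacobi_operatorE; apply/split_eq0.
Qed.

End JacobiField.

Unset Implicit Arguments.

Theorem mainTheorem2 (R : realType) (n : nat)
  (G : 'M[R]_n) (br : 'rV[R]_n -> 'rV[R]_n -> 'rV[R]_n)
  (Jm : 'rV[R]_n -> 'M[R]_n)
  (hG : inner_product G) (hbr : two_step_nilpotent br)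
  (hZ : center_nondeg G br) (hJ : is_J G br Jm)
  (z0 x0 : 'rV[R]_n) (hz0 : ncenter br z0) (hx0 : vpart G br x0)
  (z v : R -> 'rV[R]_n) (hzs : smooth z) (hvs : smooth v)
  (hz : forall t, ncenter br (z t)) (hv : forall t, vpart G br (v t)) :
  let J := Jm z0 in
  let E := fun t : R => mexp (t *: J) in
  let x' := fun t : R => x0 *m E t in
  let gdot := fun t : R => z0 + x' t in
  is_jacobi G br gdot (fun t => z t + v t *m E t) <->
  exists zeta : 'rV[R]_n, ncenter br zeta /\
    forall t : R,
      derive1 z t - br (v t *m E t) (x' t) = zeta /\
      (derive1n 2 v t) *m E t + (derive1 v t *m J) *m E t - x' t *m Jm zeta = 0.
Proof.
move=> J E x' gdot; rewrite {}/gdot {}/x' {}/E {}/J.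
rewrite (is_jacobi_iff hG hbr hZ hJ hz0 hx0 hzs hvs hz hv).
set zeta := fun s => derive1 z s - br (v s *m mexp (s *: Jm z0)) (x0 *m mexp (s *: Jm z0)).
have J_E t : derive1 v t *m Jm z0 *m mexp (t *: Jm z0) =
             derive1 v t *m mexp (t *: Jm z0) *m Jm z0.
  by rewrite -!mulmxA comm_mx_mexp.
split=> [jac | [zeta0 [_ zetaE]] t].
  have zeta'0 (t : R) : is_derive t 1 zeta 0.
    rewrite -(jac t).1 derive1E; apply: derivableP.
    by case: (is_derive_zeta Jm hbr z0 x0 hzs hvs t).
  exists (zeta 0); split; first exact: (ncenter_zeta Jm hbr z0 x0 v hzs hz 0).
  by move=> t; rewrite -(derive0_constant zeta'0 t) J_E; split; last exact: (jac t).2.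
have -> : zeta = cst zeta0 by apply/funext => s; exact: (zetaE s).1.
rewrite derive1E derive_cst /= -J_E (zetaE t).1; split=> //; exact: (zetaE t).2.
Qed.
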